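(* Let $p$ be a prime, $q$ a power of $p$, and $F$ a field of characteristic $p$ containing $\mathbb{F}_q$. Let $L\in F[x]$ be a monic $q$-polynomial of $q$-degree $n\ge1$ such that $L(x)/x$ is irreducible over $F$ and the coefficient of $x$ in $L$ is $(-1)^n$. Then the Galois group $G$ of $L$ over $F$ is isomorphic to a subgroup of $SL(n,q)$ that acts transitively on the nonzero vectors of $\mathbb{F}_q^n$.
   Context: A $q$-polynomial over $F$ is a polynomial $\sum_{i=0}^n a_i x^{q^i}\in F[x]$; with $a_n\ne0$ its $q$-degree is $n$. The Galois group of $L$ over $F$ is the Galois group of a splitting field of $L$ over $F$; it acts $\mathbb{F}_q$-linearly on the $n$-dimensional $\mathbb{F}_q$-space of roots of $L$. *)

From HB Require Import structures.
From mathcomp Require Import all_boot all_order all_algebra all_fingroup all_field.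
Set Implicit Arguments. Unset Strict Implicit. Unset Printing Implicit Defensive.
Import GRing.Theory.
Local Open Scope ring_scope.

Definition is_qpoly (F : fieldType) (q : nat) (L : {poly F}) : Prop :=
  forall j : nat, L`_j != 0 -> exists i : nat, j = (q ^ i)%N.

Definition qdegree_is (F : fieldType) (q : nat) (L : {poly F}) (n : nat) : Prop :=
  size L = ((q ^ n).+1)%N.

From HB Require Import structures.
From mathcomp Require Import all_boot all_order all_algebra all_fingroup all_field.
Set Implicit Arguments.
Unset Strict Implicit.
Unset Printing Implicit Defensive.

Import GRing.Theory.
Local Open Scope ring_scope.

(* The roots of L in its splitting field form an F_q-space V of dimension n:
   L is F_q-linear, and separable because L' = L_1 is a nonzero constant.
   The Galois group acts F_q-linearly on V, faithfully since V generates the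
   splitting field, and transitively on V \ 0 since the nonzero roots are
   those of the irreducible L/x. For a basis w of V the Moore determinant
   D = det (w_j^(q^i)) is nonzero and g(D) = det(g) D. The q-th power map
   sends the Moore matrix W to C W, with C the companion matrix of
   sum_i L_(q^i) X^i, so D^q = (-1)^n L_1 D = D: thus D lies in F_q, is fixed
   by the Galois group, and every det(g) is 1. *)

Section FrobeniusPower.
Variables (R : comNzRingType) (N : nat).

(* The unused proof argument is what makes the morphism instances below valid. *)
Definition frobenius_pow of [pchar R].-nat N := fun x : R => x ^+ N.

Hypothesis pcharN : [pchar R].-nat N.

Fact frobenius_pow_is_nmod_morphism : nmod_morphism (frobenius_pow pcharN).
Proof.
split; first by rewrite /frobenius_pow expr0n; case: N pcharN.
by move=> x y; rewrite /frobenius_pow exprDn_pchar.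
Qed.

Fact frobenius_pow_is_monoid_morphism : monoid_morphism (frobenius_pow pcharN).
Proof. by split=> [|x y]; rewrite /frobenius_pow ?expr1n ?exprMn. Qed.

HB.instance Definition _ := GRing.isNmodMorphism.Build R R (frobenius_pow pcharN)
  frobenius_pow_is_nmod_morphism.
HB.instance Definition _ := GRing.isMonoidMorphism.Build R R (frobenius_pow pcharN)
  frobenius_pow_is_monoid_morphism.

Lemma expr_sum_pchar (I : Type) (r : seq I) (P : pred I) (f : I -> R) :
  (\sum_(i <- r | P i) f i) ^+ N = \sum_(i <- r | P i) f i ^+ N.
Proof. exact: (rmorph_sum (frobenius_pow pcharN)). Qed.

End FrobeniusPower.

Lemma det_castmx (R : comNzRingType) m n (e : m = n) (A : 'M[R]_m) :
  \det (castmx (e, e) A) = \det A.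
Proof. by case: n / e; rewrite castmx_id. Qed.

Lemma det_companionmx (R : comNzRingType) (P : {poly R}) :
  P \is monic -> \det (companionmx P) = (-1) ^+ (size P).-1 * P`_0.
Proof.
move=> monP; have := char_poly_det (companionmx P); rewrite companionmxK // => ->.
by rewrite mulrA -exprMn mulrNN mulr1 expr1n mul1r.
Qed.

Lemma mulmx_cV_eq (R : pzRingType) m n (A B : 'M[R]_(m, n)) :
  (forall u : 'cV_n, A *m u = B *m u) -> A = B.
Proof.
move=> eqAB; apply/matrixP => i j.
by move/colP/(_ i): (eqAB (delta_mx j 0)); rewrite -!colE !mxE.
Qed.

Section FiniteSubfield.
Variables (E : fieldType) (K : finFieldType) (io : {rmorphism K -> E}).
Local Notation q := #|K|.

Lemma finField_card_gt1 : (1 < q)%N.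
Proof. by apply/card_gt1P; exists 0, 1; rewrite eq_sym oner_neq0. Qed.

Lemma rmorph_expf_card_pow c i : io c ^+ (q ^ i) = io c.
Proof.
rewrite -rmorphXn; congr (io _); elim: i => [|i IHi]; first by rewrite expr1.
by rewrite expnSr exprM IHi expf_card.
Qed.

Lemma expf_card_eq_im x : x ^+ q = x -> exists c, x = io c.
Proof.
move=> xq; have [c /eqP <-|noc] := pickP (fun c => io c == x); first by exists c.
exfalso.
pose Q : {poly E} := 'X^q - 'X.
have sizeQ : size Q = q.+1.
  by rewrite size_polyDl ?size_polyXn // size_polyN size_polyX ltnS finField_card_gt1.
have Q_neq0 : Q != 0 by rewrite -size_poly_eq0 sizeQ.
have uniq_s : uniq (x :: [seq io c | c <- enum K]).
  rewrite /= (map_inj_uniq (fmorph_inj io)) enum_uniq andbT.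
  by apply/mapP => -[c _ xc]; have := noc c; rewrite xc eqxx.
have roots_s : all (root Q) (x :: [seq io c | c <- enum K]).
  rewrite /= /root !hornerE xq subrr eqxx /=.
  by apply/allP => _ /mapP[c _ ->]; rewrite /root !hornerE -rmorphXn expf_card subrr.
have := max_poly_roots Q_neq0 roots_s uniq_s.
by rewrite sizeQ /= size_map -cardE ltnn.
Qed.

Definition lincomb {m} (w : seq E) (c : 'cV[K]_m) : E := \sum_(i < m) io (c i 0) * w`_i.

Lemma lincomb0 m w : lincomb w (0 : 'cV_m) = 0.
Proof. by rewrite /lincomb big1 // => i _; rewrite mxE rmorph0 mul0r. Qed.

Lemma lincombB m w (c d : 'cV_m) : lincomb w (c - d) = lincomb w c - lincomb w d.
Proof. by rewrite /lincomb -sumrB; apply: eq_bigr => i _; rewrite !mxE rmorphB mulrBl. Qed.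

Lemma lincombZ m w a (c : 'cV_m) : lincomb w (a *: c) = io a * lincomb w c.
Proof. by rewrite /lincomb mulr_sumr; apply: eq_bigr => i _; rewrite !mxE rmorphM mulrA. Qed.

Lemma lincomb_rcons m w r (c : 'cV_m.+1) : size w = m ->
  lincomb (rcons w r) c =
  lincomb w (\col_i c (widen_ord (leqnSn m) i) 0) + io (c ord_max 0) * r.
Proof.
move=> sw; rewrite /lincomb big_ord_recr /=; congr (_ + _ * _).
  by apply: eq_bigr => i _; rewrite mxE nth_rcons sw ltn_ord.
by rewrite nth_rcons sw ltnn eqxx.
Qed.

Lemma lincomb_rcons_inj m w r : size w = m -> injective (@lincomb m w) ->
  r \notin [seq lincomb w c | c <- enum 'cV_m] -> injective (@lincomb m.+1 (rcons w r)).
Proof.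
move=> sw inj_w r_free c d; rewrite !lincomb_rcons //.
set c' := \col_i _; set d' := \col_i _ => eq_cd.
have [eq_last|neq_last] := eqVneq (c ord_max 0) (d ord_max 0); last first.
  case/negP: r_free; apply/mapP.
  exists ((c ord_max 0 - d ord_max 0)^-1 *: (d' - c')); first by rewrite mem_enum.
  rewrite lincombZ lincombB.
  have -> : lincomb w d' - lincomb w c' = (io (c ord_max 0) - io (d ord_max 0)) * r.
    by apply/eqP; rewrite mulrBl subr_eq addrAC [_ * r + _]addrC eq_cd addrK.
  rewrite fmorphV rmorphB mulrA mulVf ?mul1r //.
  by rewrite subr_eq0 (inj_eq (fmorph_inj io)).
move: eq_cd; rewrite eq_last => /addIr/inj_w/colP eq_c'd'.
apply/colP => i; have [lt_im|] := ltnP i m.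
  by have := eq_c'd' (Ordinal lt_im); rewrite !mxE; congr (c _ 0 = d _ 0); apply: val_inj.
move=> le_mi; suff -> : i = ord_max by [].
by apply/val_inj/eqP; rewrite /= eqn_leq le_mi -ltnS ltn_ord.
Qed.

End FiniteSubfield.

Section QPolynomialMap.
Variables (F R : fieldType) (f : {rmorphism F -> R}) (q : nat) (L : {poly F}).

Lemma is_qpoly_map : is_qpoly q L -> is_qpoly q (map_poly f L).
Proof. by move=> L_q j; rewrite coef_map fmorph_eq0; exact: L_q. Qed.

Lemma qdegree_map n : qdegree_is q L n -> qdegree_is q (map_poly f L) n.
Proof. by rewrite /qdegree_is size_map_poly. Qed.

Lemma dvdp_X_qpoly : (0 < q)%N -> is_qpoly q L -> 'X %| L.
Proof.
move=> q_gt0 L_q; rewrite -['X]subr0 -polyC0 dvdp_XsubCl /root horner_coef0.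
apply: contraT => /L_q[i def_0].
by move: (expn_gt0 q i); rewrite -def_0 q_gt0.
Qed.

Lemma root_map_divpX x : 'X %| L -> x != 0 ->
  root (map_poly f L) x -> root (map_poly f (L %/ 'X)) x.
Proof.
move=> X_L x_neq0; rewrite -{1}(divpK X_L) rmorphM /= map_polyX rootM rootX.
by rewrite (negbTE x_neq0) orbF.
Qed.

End QPolynomialMap.

Definition moore_mx (R : pzRingType) (q n : nat) (w : seq R) : 'M[R]_n :=
  \matrix_(i < n, j < n) w`_j ^+ (q ^ i)%N.

Definition qassociate (R : nzRingType) (q n : nat) (P : {poly R}) : {poly R} :=
  \poly_(i < n.+1) P`_(q ^ i)%N.

Lemma coef_qsum (R : nzRingType) (q m : nat) (a : 'I_m -> R) (i : 'I_m) : (1 < q)%N ->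
  (\sum_(j < m) a j *: 'X^(q ^ j)%N)`_(q ^ i)%N = a i.
Proof.
move=> q_gt1; rewrite coef_sum (bigD1 i) //= coefZ coefXn eqxx mulr1 big1 ?addr0 //.
move=> j ne_ji; rewrite coefZ coefXn eqn_exp2l // -val_eqE /= in ne_ji *.
by rewrite eq_sym (negbTE ne_ji) mulr0.
Qed.

Lemma size_qsum_le (R : nzRingType) (q m : nat) (a : 'I_m -> R) : (1 < q)%N ->
  (size (\sum_(j < m) a j *: 'X^(q ^ j)%N)%R <= (q ^ m.-1).+1)%N.
Proof.
move=> q_gt1; apply/leq_sizeP => k lt_k; rewrite coef_sum big1 // => j _.
rewrite coefZ coefXn; case: eqP => [def_k|]; last by rewrite mulr0.
have : (q ^ j <= q ^ m.-1)%N by rewrite leq_exp2l // -ltnS (ltn_predK (ltn_ord j)).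
by rewrite -def_k leqNgt lt_k.
Qed.

Section QPolynomial.
Variables (E : fieldType) (K : finFieldType) (io : {rmorphism K -> E}).
Local Notation q := #|K|.
Local Notation lincomb := (lincomb io).
Hypothesis pchar_q : [pchar E].-nat q.

Lemma pnat_card_pow i : [pchar E].-nat (q ^ i)%N.
Proof. by rewrite pnatX pchar_q. Qed.

Lemma natf_card_pow_eq0 i : (0 < i)%N -> (q ^ i)%N%:R = 0 :> E.
Proof.
move=> i_gt0; apply/eqP; rewrite -[_ == 0]negbK natf_neq0_pchar; apply/negP.
move/(pnat_1 (pnat_card_pow i))/eqP; rewrite -(expn0 q) eqn_exp2l ?finField_card_gt1 //.
by rewrite eqn0Ngt i_gt0.
Qed.

Lemma expf_lincomb m w (c : 'cV_m) i :
  lincomb w c ^+ (q ^ i)%N = \sum_(j < m) io (c j 0) * w`_j ^+ (q ^ i)%N.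
Proof.
rewrite (expr_sum_pchar (pnat_card_pow i)); apply: eq_bigr => j _.
by rewrite exprMn rmorph_expf_card_pow.
Qed.

Lemma qsum_lincomb k (a : 'I_k -> E) m w (c : 'cV_m) :
  \sum_(i < k) a i * lincomb w c ^+ (q ^ i)%N =
  \sum_(j < m) io (c j 0) * \sum_(i < k) a i * w`_j ^+ (q ^ i)%N.
Proof.
under eq_bigr do rewrite expf_lincomb mulr_sumr.
rewrite exchange_big; apply: eq_bigr => j _; rewrite mulr_sumr.
by apply: eq_bigr => i _; rewrite mulrCA.
Qed.

Variables (P : {poly E}) (n : nat).
Hypotheses (P_q : is_qpoly q P) (P_deg : qdegree_is q P n).

Lemma qpoly_coef_neq0 j : P`_j != 0 -> exists2 i, (i <= n)%N & j = (q ^ i)%N.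
Proof.
move=> Pj_neq0; have [i def_j] := P_q Pj_neq0; exists i => //.
have : (j < size P)%N by rewrite ltnNge; apply: contra Pj_neq0 => /(nth_default 0)->.
by rewrite P_deg ltnS def_j leq_exp2l // finField_card_gt1.
Qed.

Lemma qpoly_expand : P = \sum_(i < n.+1) P`_(q ^ i)%N *: 'X^(q ^ i)%N.
Proof.
apply/polyP => j; rewrite coef_sum.
under eq_bigr do rewrite coefZ coefXn.
have [Pj0|/qpoly_coef_neq0[i le_in ->]] := eqVneq P`_j 0.
  rewrite Pj0 big1 // => i _; case: eqP => [def_j|]; last by rewrite mulr0.
  by rewrite -def_j Pj0 mul0r.
rewrite (bigD1 (Ordinal (le_in : (i < n.+1)%N))) //= eqxx mulr1 big1 ?addr0 //.
move=> i' ne_i'i; rewrite eqn_exp2l ?finField_card_gt1 //.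
by rewrite -val_eqE /= eq_sym in ne_i'i; rewrite (negbTE ne_i'i) mulr0.
Qed.

Lemma horner_qpoly x : P.[x] = \sum_(i < n.+1) P`_(q ^ i)%N * x ^+ (q ^ i)%N.
Proof.
rewrite {1}qpoly_expand horner_sum.
by apply: eq_bigr => i _; rewrite hornerZ hornerXn.
Qed.

Lemma root_qpoly_lincomb m w (c : 'cV_m) :
  (forall j : 'I_m, root P w`_j) -> root P (lincomb w c).
Proof.
move=> rootw; apply/rootP; rewrite horner_qpoly qsum_lincomb big1 // => j _.
by have /rootP := rootw j; rewrite horner_qpoly => ->; rewrite mulr0.
Qed.

Lemma deriv_qpoly : P^`() = (P`_1)%:P.
Proof.
rewrite {1}qpoly_expand raddf_sum big_ord_recl /= big1 ?addr0.
  by rewrite derivZ expn0 derivX alg_polyC.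
move=> i _; rewrite derivZ derivXn -mulr_natr -polyC_natr.
by rewrite natf_card_pow_eq0 // mulr0 scaler0.
Qed.

Section Roots.
Hypothesis P_1 : P`_1 != 0.
Variable rs : seq E.
Hypothesis P_rs : P %= \prod_(z <- rs) ('X - z%:P).

Lemma uniq_qpoly_roots : uniq rs.
Proof.
rewrite -separable_prod_XsubC -(eqp_separable P_rs) unlock /separable_poly deriv_qpoly.
by rewrite -alg_polyC coprimepZr // coprimep1.
Qed.

Lemma size_qpoly_roots : size rs = (q ^ n)%N.
Proof. by have := size_prod_XsubC rs id; rewrite /= -(eqp_size P_rs) P_deg => -[]. Qed.

Lemma exists_root_lincomb_inj :
  exists w : seq E,
    [/\ size w = n, forall j : 'I_n, root P w`_j & injective (lincomb w : 'cV_n -> E)].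
Proof.
suff basis (m : nat) : (m <= n)%N -> exists w : seq E,
    [/\ size w = m, forall j : 'I_m, root P w`_j & injective (lincomb w : 'cV_m -> E)].
  exact: basis.
elim: m => [_|m IHm lt_mn].
  exists [::]; split=> //; first by case.
  by move=> c d _; apply/matrixP => -[].
have [w [sw rootw inj_w]] := IHm (ltnW lt_mn).
have [/allP span_rs|/allPn[r rs_r r_free]] :=
  boolP (all (mem [seq lincomb w c | c <- enum 'cV_m]) rs).
  have := uniq_leq_size uniq_qpoly_roots span_rs.
  rewrite size_qpoly_roots size_map -cardE card_mx muln1.
  by rewrite leq_exp2l ?finField_card_gt1 // leqNgt lt_mn.
exists (rcons w r); split; first by rewrite size_rcons sw.
  move=> j; rewrite nth_rcons sw; case: ltnP => [lt_jm|le_mj].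
    exact: (rootw (Ordinal lt_jm)).
  by rewrite eqn_leq le_mj -ltnS ltn_ord (eqp_root P_rs) root_prod_XsubC.
exact: lincomb_rcons_inj.
Qed.

Section Basis.
Variable w : seq E.
Hypotheses (rootw : forall j : 'I_n, root P w`_j) (inj_w : injective (lincomb w : 'cV_n -> E)).

Lemma lincomb_onto x : root P x -> exists c : 'cV_n, lincomb w c = x.
Proof.
pose s := [seq lincomb w c | c <- enum 'cV_n].
have uniq_s : uniq s by rewrite map_inj_uniq // enum_uniq.
have s_rs : {subset s <= rs}.
  move=> _ /mapP[c _ ->]; rewrite -root_prod_XsubC -(eqp_root P_rs).
  exact: root_qpoly_lincomb.
have [|_ eq_s] := uniq_min_size uniq_s s_rs.
  by rewrite size_qpoly_roots size_map -cardE card_mx muln1.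
by rewrite (eqp_root P_rs) root_prod_XsubC -eq_s => /mapP[c _ ->]; exists c.
Qed.

Local Notation W := (moore_mx q n w).

(* A null combination r of the rows of W would give the q-polynomial
   sum_i r_i X^(q^i), of degree at most q^(n-1), vanishing at all q^n roots. *)
Lemma det_moore_neq0 : \det W != 0.
Proof.
apply/negP => /det0P[r r_neq0 rW0].
pose Q : {poly E} := \sum_(i < n) r 0 i *: 'X^(q ^ i)%N.
have Q_rs : all (root Q) rs.
  apply/allP => x; rewrite -root_prod_XsubC -(eqp_root P_rs) => /lincomb_onto[c <-].
  apply/rootP; rewrite horner_sum; under eq_bigr do rewrite hornerZ hornerXn.
  rewrite qsum_lincomb big1 // => j _.
  have := congr1 (fun X : 'rV[E]_n => X 0 j) rW0; rewrite !mxE.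
  by under eq_bigr do rewrite mxE; move->; rewrite mulr0.
have Q_neq0 : Q != 0.
  apply: contraNneq r_neq0 => Q0; apply/eqP/rowP => i.
  by rewrite !mxE -(coef_qsum (r 0) i (finField_card_gt1 K)) -/Q Q0 coef0.
have := max_poly_roots Q_neq0 Q_rs uniq_qpoly_roots.
move/leq_trans/(_ (size_qsum_le (r 0) (finField_card_gt1 K))).
rewrite size_qpoly_roots ltnS leq_exp2l ?finField_card_gt1 //.
case: n r r_neq0 {rW0 Q Q_rs Q_neq0} => [|n'] r; last by rewrite ltnn.
by rewrite (thinmx0 r) eqxx.
Qed.

End Basis.

Lemma qpoly_root_basis :
  exists w : seq E, [/\ forall j : 'I_n, root P w`_j,
    injective (lincomb w : 'cV_n -> E),
    forall x, root P x -> exists c : 'cV_n, lincomb w c = x,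
    forall c : 'cV_n, root P (lincomb w c) &
    \det (moore_mx q n w) != 0].
Proof.
have [w [_ rootw inj_w]] := exists_root_lincomb_inj; exists w; split=> //.
- exact: lincomb_onto.
- by move=> c; exact: root_qpoly_lincomb.
- exact: det_moore_neq0.
Qed.

End Roots.

Section MooreFrobenius.
Hypothesis P_monic : P \is monic.
Variable w : seq E.
Hypothesis rootw : forall j : 'I_n, root P w`_j.
Local Notation W := (moore_mx q n w).

Lemma det_moore_expf : \det W ^+ q = (-1) ^+ n * P`_1 * \det W.
Proof.
have lead_P : P`_(q ^ n)%N = 1 by have /monicP := P_monic; rewrite lead_coefE P_deg.
set Pc := qassociate q n P.
have size_Pc : size Pc = n.+1 by rewrite /Pc size_poly_eq //= lead_P oner_neq0.
have monic_Pc : Pc \is monic.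
  by rewrite monicE lead_coefE size_Pc coef_poly ltnSn lead_P.
have e : (size Pc).-1 = n by rewrite size_Pc.
pose frob := frobenius_pow (pnat_card_pow 1).
have frobW : map_mx frob W = castmx (e, e) (companionmx Pc) *m W.
  apply/matrixP => i j; rewrite !mxE /frob /frobenius_pow -exprM -expnSr.
  under eq_bigr do rewrite castmxE !mxE /= size_Pc.
  have [-> | ne_in] := eqVneq (i : nat) n.-1.
    rewrite prednK ?(leq_ltn_trans _ (ltn_ord i)) //.
    under eq_bigr => l _ do rewrite coef_poly ltnS (ltnW (ltn_ord l)) mulNr.
    rewrite sumrN; have /rootP := rootw j; rewrite horner_qpoly big_ord_recr /=.
    by rewrite lead_P mul1r => /eqP; rewrite addrC addr_eq0 => /eqP.
  have lt_in : (i.+1 < n)%N.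
    rewrite -ltn_predRL ltn_neqAle ne_in -ltnS prednK ?ltn_ord //.
    exact: leq_ltn_trans (leq0n i) (ltn_ord i).
  rewrite (bigD1 (Ordinal lt_in)) //= eqxx mul1r big1 ?addr0 // => l.
  by rewrite -val_eqE /= eq_sym => /negbTE ->; rewrite mul0r.
have := det_map_mx frob W; rewrite frobW det_mulmx det_castmx det_companionmx //.
by rewrite size_Pc coef_poly /= expn0 /frob /frobenius_pow expn1 => <-.
Qed.

End MooreFrobenius.
End QPolynomial.

Section SplittingFieldAutomorphisms.
Variables (F : fieldType) (E : splittingFieldType F).
Implicit Types (g h : gal_of (fullv : {vspace E})) (L Q : {poly F}).

Lemma gal_fix_in_alg g a : g \in 'Gal(fullv / 1%VS)%g -> g (in_alg E a) = in_alg E a.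
Proof. by move=> galg; rewrite (fixed_gal (sub1v _) galg) // rpredZ // mem1v. Qed.

Lemma root_map_gal L g x : g \in 'Gal(fullv / 1%VS)%g ->
  root (map_poly (in_alg E) L) x -> root (map_poly (in_alg E) L) (g x).
Proof.
move=> galg /(rmorph_root g); rewrite (fixedPoly_gal (sub1v _) galg) //.
by apply/polyOver1P; exists L.
Qed.

Lemma gal_conjugate_roots Q x y : irreducible_poly Q ->
    root (map_poly (in_alg E) Q) x -> root (map_poly (in_alg E) Q) y ->
  exists2 g, g \in 'Gal(fullv / 1%VS)%g & g x = y.
Proof.
move=> irrQ Qx Qy.
apply: (normalField_root_minPoly (sub1v _) (normalFieldf _) (memvf x)).
have [m def_m] : exists m, minPoly 1%VS x = map_poly (in_alg E) m.
  by apply/polyOver1P; exact: minPolyOver.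
have Q_1 : map_poly (in_alg E) Q \is a polyOver 1%VS by apply/polyOver1P; exists Q.
have m_dvd_Q : m %| Q by rewrite -(dvdp_map (in_alg E)) -def_m minPoly_dvdp.
have size_m : size m != 1.
  rewrite -(size_map_poly (in_alg E)) -def_m neq_ltn.
  by rewrite (root_size_gt1 (monic_neq0 (monic_minPoly _ _)) (root_minPoly _ _)) orbT.
have eq_mQ : map_poly (in_alg E) m %= map_poly (in_alg E) Q.
  by rewrite eqp_map; exact: irrQ.2.
by rewrite def_m (eqp_root eq_mQ).
Qed.

Lemma gal_eq_generators (rs : seq E) g h :
  <<1 & rs>>%VS = fullv -> {in rs, g =1 h} -> g = h.
Proof.
move=> gen_rs eq_gh; pose t := (g * h^-1)%g.
have rs_fixed : {subset rs <= fixedField [set t]}.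
  move=> z rs_z; apply/fixedFieldP; first exact: memvf.
  move=> _ /set1P->; rewrite galM ?memvf // eq_gh // -galM ?memvf //.
  by rewrite mulgV gal_id.
have t_id x : t x = x.
  have : (<<1 & rs>> <= fixedField [set t])%VS.
    by apply/Fadjoin_seqP; split; [exact: sub1v | exact: rs_fixed].
  by rewrite gen_rs => /subvP/(_ x (memvf x))/(fixedFieldP (memvf x)); apply; exact: set11.
by apply/eqP; rewrite eq_mulgV1; apply/gal_eqP => x _; rewrite t_id gal_id.
Qed.

End SplittingFieldAutomorphisms.

Section GaloisRepresentation.
Variables (F : fieldType) (E : splittingFieldType F) (K : finFieldType).
Variables (iota : {rmorphism K -> F}) (L : {poly F}) (n : nat) (w : seq E).
Let io : {rmorphism K -> E} := in_alg E \o iota.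
Local Notation q := #|K|.
Local Notation P := (map_poly (in_alg E) L).
Local Notation lincomb := (lincomb io).
Local Notation G := 'Gal(fullv / 1%VS)%g.
Implicit Types (g h : gal_of (fullv : {vspace E})).

Hypotheses (rootw : forall j : 'I_n, root P w`_j) (inj_w : injective (lincomb w : 'cV_n -> E)).
Hypothesis onto_w : forall x, root P x -> exists c : 'cV_n, lincomb w c = x.

Definition root_coords x : 'cV[K]_n := odflt 0 [pick c | lincomb w c == x].

Lemma root_coordsK x : root P x -> lincomb w (root_coords x) = x.
Proof.
case/onto_w => c <-; rewrite /root_coords.
by case: pickP => [d /eqP // | /(_ c)]; rewrite eqxx.
Qed.

Definition galmx g : 'M[K]_n := \matrix_(i, j) root_coords (g w`_j) i 0.

Lemma gal_io g c : g \in G -> g (io c) = io c.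
Proof. exact: gal_fix_in_alg. Qed.

Lemma gal_lincomb g m (v : seq E) (c : 'cV_m) :
  g \in G -> g (lincomb v c) = \sum_(j < m) io (c j 0) * g v`_j.
Proof.
move=> galg; rewrite rmorph_sum; apply: eq_bigr => j _.
by rewrite rmorphM; congr (_ * _); exact: gal_io.
Qed.

Lemma lincomb_galmx g u : g \in G -> lincomb w (galmx g *m u) = g (lincomb w u).
Proof.
move=> galg; rewrite gal_lincomb // /lincomb.
under eq_bigr do rewrite mxE rmorph_sum mulr_suml.
rewrite exchange_big; apply: eq_bigr => j _.
rewrite -(root_coordsK (root_map_gal galg (rootw j))) mulr_sumr.
by apply: eq_bigr => i _; rewrite !mxE rmorphM -mulrA mulrCA.
Qed.

Lemma galmxM g h : g \in G -> h \in G -> galmx (g * h)%g = galmx h *m galmx g.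
Proof.
move=> galg galh; apply: mulmx_cV_eq => u; apply: inj_w.
by rewrite -mulmxA !lincomb_galmx ?groupM // galM // memvf.
Qed.

Lemma galmx_inj : splittingFieldFor 1%VS P fullv -> {in G &, injective galmx}.
Proof.
case=> rs P_rs gen_rs g h galg galh eq_gh; apply: (gal_eq_generators gen_rs) => z rs_z.
have /onto_w[c <-] : root P z by rewrite (eqp_root P_rs) root_prod_XsubC.
by rewrite -!lincomb_galmx // eq_gh.
Qed.

Lemma lincomb_col_galmx g j : g \in G -> lincomb w (col j (galmx g)) = g w`_j.
Proof.
move=> galg; rewrite -[RHS](root_coordsK (root_map_gal galg (rootw j))).
by congr lincomb; apply/colP => i; rewrite !mxE.
Qed.

Hypothesis pchar_q : [pchar E].-nat q.
Local Notation W := (moore_mx q n w).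

Lemma gal_det_moore g : g \in G -> g (\det W) = \det W * io (\det (galmx g)).
Proof.
move=> galg; rewrite -det_map_mx -det_map_mx -det_mulmx; congr (\det _).
apply/matrixP => i j; rewrite !mxE; under eq_bigr do rewrite !mxE.
rewrite rmorphXn; transitivity (lincomb w (col j (galmx g)) ^+ (q ^ i)%N).
  by rewrite lincomb_col_galmx.
rewrite expf_lincomb //.
by apply: eq_bigr => l _; rewrite !mxE mulrC.
Qed.

Lemma det_galmx g : g \in G -> \det W != 0 -> \det W ^+ q = \det W ->
  \det (galmx g) = 1.
Proof.
move=> galg W_neq0 /(expf_card_eq_im io)[c def_W].
apply: (fmorph_inj io); rewrite rmorph1; apply: (mulfI W_neq0).
by rewrite mulr1 -gal_det_moore // def_W gal_io.
Qed.

Lemma galmx_transitive : 'X %| L -> irreducible_poly (L %/ 'X) ->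
    (forall c : 'cV_n, root P (lincomb w c)) ->
  forall u v : 'cV[K]_n, u != 0 -> v != 0 -> exists2 g, g \in G & galmx g *m u = v.
Proof.
move=> X_L irr_L root_w u v u_neq0 v_neq0.
have lincomb_neq0 (c : 'cV_n) : c != 0 -> lincomb w c != 0.
  by move=> c_neq0; apply: contraNneq c_neq0 => wc0; apply/eqP/inj_w; rewrite wc0 lincomb0.
have [g galg gu] := gal_conjugate_roots irr_L
  (root_map_divpX X_L (lincomb_neq0 u u_neq0) (root_w u))
  (root_map_divpX X_L (lincomb_neq0 v v_neq0) (root_w v)).
by exists g => //; apply: inj_w; rewrite lincomb_galmx.
Qed.

End GaloisRepresentation.

Theorem theorem3p1
  (p k : nat) (F : fieldType) (K : finFieldType) (iota : {rmorphism K -> F})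
  (L : {poly F}) (n : nat) (E : splittingFieldType F) :
  prime p -> (0 < k)%N -> p \in [pchar F] -> #|K| = (p ^ k)%N ->
  is_qpoly (p ^ k) L -> qdegree_is (p ^ k) L n -> (1 <= n)%N ->
  L \is monic ->
  irreducible_poly (L %/ 'X) ->
  L`_1 = (-1) ^+ n ->
  splittingFieldFor 1%VS (map_poly (in_alg E) L) fullv ->
  exists phi : gal_of (fullv : {vspace E}) -> 'M[K]_n,
    [/\ {in 'Gal(fullv / 1%VS)%g &, forall g h, phi (g * h)%g = phi g *m phi h},
        {in 'Gal(fullv / 1%VS)%g &, injective phi},
        {in 'Gal(fullv / 1%VS)%g, forall g, \det (phi g) = 1} &
        forall u v : 'cV[K]_n, u != 0 -> v != 0 ->
          exists2 g, g \in 'Gal(fullv / 1%VS)%g & phi g *m u = v].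
Proof.
move=> p_pr _ pchar_p cardK L_q L_deg _ L_monic irr_L L_1 splitP.
rewrite -cardK in L_q L_deg; pose io : {rmorphism K -> E} := in_alg E \o iota.
have pchar_q : [pchar E].-nat #|K| by rewrite cardK pnatX pnatE // pchar_lalg pchar_p.
have P_q := is_qpoly_map (f := in_alg E) L_q; have P_deg := qdegree_map (in_alg E) L_deg.
have P_1 : (map_poly (in_alg E) L)`_1 = (-1) ^+ n.
  by rewrite coef_map /= L_1 -in_algE rmorphXn rmorphN1.
have P_1_neq0 : (map_poly (in_alg E) L)`_1 != 0 by rewrite P_1 signr_eq0.
have [rs P_rs _] := splitP.
have [w [root_w inj_w onto_w root_lincomb W_neq0]] :=
  qpoly_root_basis io pchar_q P_q P_deg P_1_neq0 P_rs.
have W_q : \det (moore_mx #|K| n w) ^+ #|K| = \det (moore_mx #|K| n w).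
  rewrite (det_moore_expf pchar_q P_q P_deg (monic_map _ L_monic) root_w) P_1.
  by rewrite -exprMn mulrNN mulr1 expr1n mul1r.
exists (fun g => galmx iota n w g^-1%g); split.
- by move=> g h galg galh; rewrite invMg (galmxM root_w inj_w onto_w) ?groupV.
- move=> g h galg galh /(galmx_inj root_w onto_w splitP).
  by rewrite !groupV => /(_ galg galh)/invg_inj.
- by move=> g galg; rewrite (det_galmx root_w onto_w pchar_q) ?groupV.
move=> u v u_neq0 v_neq0.
have X_L := dvdp_X_qpoly (ltnW (finField_card_gt1 K)) L_q.
have [g galg g_uv] :=
  galmx_transitive root_w inj_w onto_w X_L irr_L root_lincomb u_neq0 v_neq0.
by exists g^-1%g; rewrite ?groupV ?invgK.
Qed.
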